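(* Let $k\ge 2$ and $N\ge 1$ be integers such that neither $N<k$ nor $k\mid N$. Suppose there exist positive integers $A,B$ such that $(A)_k$ and $(B)_k$ are palindromes and $A/B=N$. Then, for the smallest such $A$, $$|(A)_k| \le 2\left(\lceil \log_k N\rceil + k^{\lceil \log_k N\rceil}\, N^2 + \left\lceil \frac{\log_k N}{2}\right\rceil\right)+1.$$
   Context: For an integer $n\ge1$ and base $k\ge 2$, $(n)_k$ denotes the base-$k$ representation of $n$ (most significant digit first, no leading zeros), and $|(n)_k|$ its length (number of digits). A string is a palindrome if it reads the same forwards and backwards. *)

From mathcomp Require Import all_boot.

Fixpoint digits_rev_aux (k n fuel : nat) : seq nat :=
  match fuel with
  | 0 => [::]
  | fuel'.+1 => if n == 0 then [::] else (n %% k) :: digits_rev_aux k (n %/ k) fuel'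
  end.

(* (n)_k : base-k representation, most significant digit first, no leading
   zeros (for n >= 1 and k >= 2; fuel n suffices since each step divides by k). *)
Definition base_digits (k n : nat) : seq nat := rev (digits_rev_aux k n n).

Definition base_len (k n : nat) : nat := size (base_digits k n).

Definition palindrome (s : seq nat) : bool := rev s == s.

Definition good_pair (k N A : nat) : Prop :=
  0 < A /\ exists B, 0 < B /\ palindrome (base_digits k A) /\
                     palindrome (base_digits k B) /\ A = N * B.

(* Write A = N * B, where A and B are base-k palindromes with l and n digits;
   then l - n <= ceil(log_k N).  Multiply B by N digit by digit and record, at
   depth p, the carry into position p, the carry into position n - p and the
   l - n digits of A starting at position n - p: there are at most
   k^(l-n) N^2 such states.  If n exceeds twice that number, two depths p < p'
   carry the same state, and deleting the digit blocks [p, p') and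
   [n - p', n - p) from B, and [p, p') and [l - p', l - p) from A, gives
   shorter palindromes A' = N * B'.  So a minimal A is short. *)

From mathcomp Require Import all_boot zify.

Set Implicit Arguments.
Unset Strict Implicit.

Lemma modnM_split m a b : m %% (b * a) = m %/ a %% b * a + m %% a.
Proof. by rewrite modn_divl -(modn_dvdm m (dvdn_mull b (dvdnn a))); exact: divn_eq. Qed.

Lemma pigeonhole (T : finType) (f : nat -> T) n :
  #|T| <= n -> exists i j, [/\ i < j, j <= n & f i = f j].
Proof.
move=> cardT; pose g (i : 'I_n.+1) := f i.
have /injectivePn [x [y neq_xy eq_fxy]] : ~~ injectiveb g.
  apply: contraTN cardT => /injectiveP/leq_card.
  by rewrite card_ord -ltnNge.
have [lt_xy | lt_yx | /val_inj eq_xy] := ltngtP x y.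
- by exists x, y; split; rewrite // -ltnS.
- by exists y, x; split; rewrite // -ltnS.
- by rewrite eq_xy eqxx in neq_xy.
Qed.

Lemma palindrome_mkseq (f : nat -> nat) L :
  palindrome (mkseq f L) <-> forall i, i < L -> f i = f (L - i.+1).
Proof.
have nth_rev_mkseq i : i < L -> nth 0 (rev (mkseq f L)) i = f (L - i.+1).
  by move=> lt_iL; rewrite nth_rev size_mkseq // nth_mkseq //; lia.
rewrite /palindrome; split=> [/eqP pal_f i lt_iL | pal_f].
  by rewrite -nth_rev_mkseq // pal_f nth_mkseq.
apply/eqP/(@eq_from_nth _ 0) => [|i]; rewrite size_rev // size_mkseq => lt_iL.
by rewrite nth_rev_mkseq // nth_mkseq // -pal_f.
Qed.

Section Digits.

Variable k : nat.
Hypothesis k_gt1 : 1 < k.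

Let k_gt0 : 0 < k := ltnW k_gt1.

Let expk_gt0 t : 0 < k ^ t.
Proof. by rewrite expn_gt0 k_gt0. Qed.

Definition digit i X := X %/ k ^ i %% k.

Lemma digitE i X : digit i X = X %% k ^ i.+1 %/ k ^ i.
Proof. by rewrite /digit modn_divl expnS. Qed.

Lemma digitS i X : digit i.+1 X = digit i (X %/ k).
Proof. by rewrite /digit -divnMA -expnS. Qed.

Lemma digit_top_gt0 L X : X < k ^ L.+1 -> (0 < digit L X) = (k ^ L <= X).
Proof.
move=> lt_X; rewrite /digit modn_small ?divn_gt0 //.
by rewrite ltn_divLR // -expnS.
Qed.

Lemma digits_rev_auxE fuel X L : X <= fuel -> X < k ^ L -> (0 < L -> k ^ L.-1 <= X) ->
  digits_rev_aux k X fuel = mkseq (digit ^~ X) L.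
Proof.
elim: fuel X L => [|fuel IH] X [|L] //= le_X lt_X lo_X.
- by have := leq_trans (lo_X isT) le_X; rewrite leqNgt expk_gt0.
- by move: lt_X; rewrite expn0 ltnS leqn0 => /eqP ->.
have X_gt0 : 0 < X by apply: leq_trans (lo_X isT).
rewrite gtn_eqF // /mkseq /= {1}/digit expn0 divn1; congr (_ :: _).
rewrite (IH _ L) /mkseq.
- by rewrite -[1]/(1 + 0) iotaDl -map_comp; apply: eq_map => i /=; rewrite add1n digitS.
- by have := ltn_Pdiv k_gt1 X_gt0; lia.
- by rewrite ltn_divLR // -expnSr.
- by move=> L_gt0; rewrite leq_divRL // -expnSr prednK // lo_X.
Qed.

Lemma base_digitsE X : 0 < X ->
  base_digits k X = rev (mkseq (digit ^~ X) (trunc_log k X).+1).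
Proof.
move=> X_gt0; rewrite /base_digits (@digits_rev_auxE _ _ (trunc_log k X).+1) //.
- exact: trunc_log_ltn.
- by move=> _; apply: trunc_logP.
Qed.

Lemma base_lenE X : 0 < X -> base_len k X = (trunc_log k X).+1.
Proof. by move=> X_gt0; rewrite /base_len base_digitsE // size_rev size_mkseq. Qed.

Definition palnum L X :=
  [/\ k ^ L.-1 <= X, X < k ^ L & forall i, i < L -> digit i X = digit (L - i.+1) X].

Lemma palnumP L X :
  palnum L X <-> [/\ 0 < X, palindrome (base_digits k X) & base_len k X = L].
Proof.
have pal_rev (s : seq nat) : palindrome (rev s) = palindrome s.
  by rewrite /palindrome revK eq_sym.
split=> [[lo_X hi_X pal_X] | [X_gt0 pal_X <-]].
  have L_gt0 : 0 < L by case: L lo_X hi_X {pal_X} => // lo_X /(leq_ltn_trans lo_X); rewrite ltnn.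
  have X_gt0 : 0 < X by apply: leq_trans lo_X.
  have tlog_X : trunc_log k X = L.-1 by apply: trunc_log_eq => //; rewrite prednK // lo_X.
  rewrite base_lenE // base_digitsE // pal_rev tlog_X prednK //.
  by split=> //; apply/palindrome_mkseq.
move: pal_X; rewrite base_lenE // base_digitsE // pal_rev => /palindrome_mkseq.
by split; [apply: trunc_logP | apply: trunc_log_ltn |].
Qed.

Definition cut X j e := X %/ k ^ (j + e) * k ^ j + X %% k ^ j.

Lemma modn_cut X j e i : i <= j -> cut X j e %% k ^ i = X %% k ^ i.
Proof.
move=> le_ij; have /eqP hi0 : k ^ i %| X %/ k ^ (j + e) * k ^ j.
  by apply/dvdn_mull/dvdn_exp2l.
by rewrite /cut -modnDml hi0 add0n modn_dvdm // dvdn_exp2l.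
Qed.

Lemma divn_cut X j e i : j <= i -> cut X j e %/ k ^ i = X %/ k ^ (i + e).
Proof.
move=> le_ji; have -> : k ^ i = k ^ j * k ^ (i - j) by rewrite -expnD subnKC.
rewrite divnMA /cut divnMDl // (divn_small (ltn_pmod X (expk_gt0 j))) addn0 -divnMA -expnD.
by congr (_ %/ k ^ _); lia.
Qed.

Lemma digit_cut X j e i :
  digit i (cut X j e) = if i < j then digit i X else digit (i + e) X.
Proof.
case: ltnP => [lt_ij | le_ji]; last by rewrite /digit divn_cut.
by rewrite !digitE modn_cut.
Qed.

Lemma cut_lt X j e L : X < k ^ L -> j + e <= L -> cut X j e < k ^ (L - e).
Proof.
move=> lt_X le_L; have -> : L - e = L - (j + e) + j by lia.
by rewrite expnD -ltn_divLR // divn_cut // ltn_divLR // -expnD subnK.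
Qed.

Lemma cut_shift X j e s :
  X %/ k ^ (j + e) %% k ^ s = X %/ k ^ j %% k ^ s -> cut X (j + s) e = cut X j e.
Proof.
move=> eq_window.
have hi : X %/ k ^ (j + e) = X %/ k ^ (j + s + e) * k ^ s + X %/ k ^ j %% k ^ s.
  by rewrite -eq_window addnAC (expnD k (j + e) s) divnMA; apply: divn_eq.
have lo : X %% k ^ (j + s) = X %/ k ^ j %% k ^ s * k ^ j + X %% k ^ j.
  by rewrite (addnC j s) expnD modnM_split.
rewrite /cut hi lo (expnD k j s); lia.
Qed.

Definition carry N B i := N * (B %% k ^ i) %/ k ^ i.

Lemma carry_lt N B i : 0 < N -> carry N B i < N.
Proof. by move=> N_gt0; rewrite /carry ltn_divLR // ltn_pmul2l // ltn_pmod. Qed.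

Lemma divn_mul_carry N B i : N * B %/ k ^ i = N * (B %/ k ^ i) + carry N B i.
Proof. by rewrite {1}(divn_eq B (k ^ i)) mulnDr mulnA divnMDl. Qed.

Lemma mul_modn_carry N B i : N * (B %% k ^ i) = N * B %% k ^ i + carry N B i * k ^ i.
Proof. by rewrite addnC /carry -modnMmr; apply: divn_eq. Qed.

Lemma carry_cut N B j e i : i <= j -> carry N (cut B j e) i = carry N B i.
Proof. by move=> le_ij; rewrite /carry modn_cut. Qed.

Lemma cut_mul N B j e : carry N B j = carry N B (j + e) -> cut (N * B) j e = N * cut B j e.
Proof.
move=> eq_carry; rewrite /cut divn_mul_carry mulnDr mulnA mul_modn_carry eq_carry; lia.
Qed.

Lemma palnum_lt l' l X Y : palnum l' X -> palnum l Y -> l' < l -> X < Y.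
Proof.
case=> _ hi_X _ [lo_Y _ _] lt_l; apply: leq_trans hi_X (leq_trans _ lo_Y).
by rewrite leq_exp2l //; lia.
Qed.

Lemma palnum_cut L X p p' : palnum L X -> 0 < p -> p < p' -> 2 * p' <= L ->
  palnum (L - 2 * (p' - p)) (cut (cut X (L - p') (p' - p)) p (p' - p)).
Proof.
case=> lo_X hi_X pal_X p_gt0 lt_pp' le_L.
set d := p' - p; set Y := cut _ p d.
have digit_Y i : digit i Y = if i < p then digit i X
    else if i + d < L - p' then digit (i + d) X else digit (i + d + d) X.
  rewrite !digit_cut; case: (ltnP i p) => // lt_ip; rewrite ifT //; lia.
have L'_gt0 : 0 < L - 2 * d by lia.
have hi_Y : Y < k ^ (L - 2 * d).
  by rewrite (_ : L - 2 * d = L - d - d); [apply: cut_lt; [apply: cut_lt|] | ]; lia.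
split=> //.
- rewrite -digit_top_gt0 ?prednK // digit_Y !ifF; try lia.
  have -> : (L - 2 * d).-1 + d + d = L.-1 by lia.
  by rewrite digit_top_gt0 ?prednK //; lia.
- move=> i lt_i; rewrite !digit_Y.
  case: (ltnP i p) => h1; case: (ltnP (L - 2 * d - i.+1) p) => h2;
  case: (ltnP (i + d) (L - p')) => h3; case: (ltnP (L - 2 * d - i.+1 + d) (L - p')) => h4;
  try (exfalso; lia); (rewrite pal_X; [congr (digit _ _); lia | lia]).
Qed.

Lemma base_len_mul N B : 0 < N -> 0 < B ->
  base_len k B <= base_len k (N * B) <= base_len k B + up_log k N.
Proof.
move=> N_gt0 B_gt0; have NB_gt0 : 0 < N * B by rewrite muln_gt0 N_gt0.
rewrite !base_lenE // ltnS leq_trunc_log ?leq_pmull //=.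
rewrite -(ltn_exp2l _ _ k_gt1); apply: leq_ltn_trans (trunc_logP k_gt1 NB_gt0) _.
rewrite addnC expnD; apply: leq_ltn_trans (leq_mul (up_logP N k_gt1) (leqnn B)) _.
by rewrite ltn_pmul2l // trunc_log_ltn.
Qed.

Lemma carry_window_repeat N B X n s : 0 < N ->
  exists p p', [/\ 0 < p < p', p' <= (k ^ s * N ^ 2).+1 &
    (carry N B p, carry N B (n - p), X %/ k ^ (n - p) %% k ^ s) =
    (carry N B p', carry N B (n - p'), X %/ k ^ (n - p') %% k ^ s)].
Proof.
move=> N_gt0; pose state i : 'I_N * 'I_N * 'I_(k ^ s) :=
  (Ordinal (carry_lt B i N_gt0), Ordinal (carry_lt B (n - i) N_gt0),
   Ordinal (ltn_pmod (X %/ k ^ (n - i)) (expk_gt0 s))).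
have card_state : #|{: 'I_N * 'I_N * 'I_(k ^ s)}| <= k ^ s * N ^ 2.
  by rewrite !card_prod !card_ord mulnC mulnn.
have [i [j [lt_ij le_j eq_state]]] := pigeonhole (state \o succn) card_state.
by exists i.+1, j.+1; split=> //; case: eq_state => -> -> ->.
Qed.

Lemma good_pair_shrink N B l n : 0 < N -> n <= l -> palnum n B -> palnum l (N * B) ->
  2 * (k ^ (l - n) * N ^ 2).+1 <= n -> exists2 A', good_pair k N A' & A' < N * B.
Proof.
move=> N_gt0 le_nl palB palA long_B.
have [p [p' [/andP[p_gt0 lt_pp'] le_p' repeat_state]]] :=
  carry_window_repeat B (N * B) n (l - n) N_gt0.
have le_pn : 2 * p' <= n by apply: leq_trans long_B; rewrite leq_mul2l le_p'.
set d := p' - p; set B' := cut (cut B (n - p') d) p d.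
have hi_pd : n - p' + d = n - p by lia.
have cut_hi : cut (N * B) (l - p') d = N * cut B (n - p') d.
  rewrite (_ : l - p' = n - p' + (l - n)); last by lia.
  case: repeat_state => _ eq_hi eq_window.
  by rewrite cut_shift ?hi_pd // cut_mul ?hi_pd.
have cut_lo : cut (cut (N * B) (l - p') d) p d = N * B'.
  case: repeat_state => eq_lo _ _.
  by rewrite cut_hi cut_mul // !carry_cut ?subnKC //; lia.
have palB' : palnum (n - 2 * d) B' by apply: palnum_cut.
have palA' : palnum (l - 2 * d) (N * B').
  by rewrite -cut_lo; apply: palnum_cut => //; apply: leq_trans le_pn le_nl.
exists (N * B'); last by apply: palnum_lt palA' palA _; lia.
have [A'_gt0 palindromeA' _] := (palnumP _ _).1 palA'.
have [B'_gt0 palindromeB' _] := (palnumP _ _).1 palB'.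
by split=> //; exists B'.
Qed.

End Digits.

Theorem theorem7 (k N : nat) :
  2 <= k -> 1 <= N -> ~ (N < k) -> ~ (k %| N) ->
  (exists A, good_pair k N A) ->
  forall A, good_pair k N A -> (forall A', good_pair k N A' -> A <= A') ->
  base_len k A <=
    2 * (up_log k N + k ^ (up_log k N) * N ^ 2 + uphalf (up_log k N)) + 1.
Proof.
move=> k_gt1 N_gt0 _ _ _ A [A_gt0 [B [B_gt0 [palA [palB eq_A]]]]] minA; subst A.
have /andP[le_nl le_lnm] := base_len_mul k_gt1 N_gt0 B_gt0.
have palnumA : palnum k (base_len k (N * B)) (N * B) by apply/(palnumP k_gt1).
have palnumB : palnum k (base_len k B) B by apply/(palnumP k_gt1).
rewrite leqNgt; apply/negP => long_A.
have le_window : k ^ (base_len k (N * B) - base_len k B) <= k ^ up_log k N.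
  by rewrite leq_exp2l //; lia.
have long_B : 2 * (k ^ (base_len k (N * B) - base_len k B) * N ^ 2).+1 <= base_len k B.
  by have := leq_mul le_window (leqnn (N ^ 2)); lia.
have [A' goodA' ltA'] := good_pair_shrink k_gt1 N_gt0 le_nl palnumB palnumA long_B.
by have := minA _ goodA'; rewrite leqNgt ltA'.
Qed.
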